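(* Let $(X,d)$ be a complete metric space and let $G:X\times X\to X$ be a mapping such that (a) $G(x,x)=x$ for all $x\in X$, and (b) for $x,y\in X$, $G(x,y)=x$ implies $y=x$. Let $T:X\to P_{cl}(X)$ be a multivalued operator with $SFix(T)\neq\emptyset$ and let $T_G(x)=\{G(x,u):u\in T(x)\}$ be the admissible perturbation of $T$ corresponding to $G$. Suppose there exist $\alpha,\beta,\gamma\ge0$ with $\alpha+\beta+\gamma<1$ such that $$H(T_G(x),T_G(y))\le\alpha d(x,y)+\beta D(x,T_G(y))+\gamma D(y,T_G(x))\quad\text{for all }x,y\in X.$$ Then: (i) $Fix(T)=SFix(T)=\{x^*\}$ for some $x^*\in X$; (ii) if additionally there exists $l\in(0,1)$ with $H(T(x),\{x^*\})\le l\,H(T_G(x),\{x^*\})$ for all $x\in X$, then for each $x\in X$ the sequence $(T^n(x))_{n\in\mathbb N}$ converges to $\{x^*\}$ with respect to $H$, i.e. $H(T^n(x),\{x^*\})\to0$; (iii) if additionally there exists $L>0$ such that $D(x,T_G(x))\le L\,D(x,T(x))$ for all $x\in X$, then for some $\xi\in(0,1)$, $$d(x,x^* )\le\frac{(1+\gamma)L}{(1-\alpha-\beta)\xi}D(x,T(x))\quad\text{for all }x\in X.$$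
   Context: $P_{cl}(X)$ is the family of nonempty closed subsets of $X$. $Fix(T)=\{x:x\in T(x)\}$, $SFix(T)=\{x:T(x)=\{x\}\}$. For nonempty $A,B\subseteq X$: $D(a,B)=\inf_{b\in B}d(a,b)$, $D(A,B)=\inf\{d(a,b):a\in A,b\in B\}$, $e(A,B)=\sup_{a\in A}D(a,B)$, $H(A,B)=\max\{e(A,B),e(B,A)\}$. Iterates: $T^0(x)=\{x\}$, $T^{n}(x)=\bigcup_{y\in T^{n-1}(x)}T(y)$. *)

From HB Require Import structures.
From mathcomp Require Import all_boot all_order all_algebra.
From mathcomp Require Import all_classical all_reals all_analysis.
Set Implicit Arguments. Unset Strict Implicit. Unset Printing Implicit Defensive.
Import Order.TTheory GRing.Theory Num.Theory.
Local Open Scope classical_set_scope.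
Local Open Scope ring_scope.

Definition is_metric (R : realType) (X : Type) (d : X -> X -> R) : Prop :=
  (forall x y, 0 <= d x y) /\
  (forall x y, d x y = 0 <-> x = y) /\
  (forall x y, d x y = d y x) /\
  (forall x y z, d x z <= d x y + d y z).

Definition dconv (R : realType) (X : Type) (d : X -> X -> R)
  (u : nat -> X) (l : X) : Prop :=
  forall eps : R, 0 < eps -> exists N : nat, forall n, (N <= n)%N -> d (u n) l < eps.

Definition dcauchy (R : realType) (X : Type) (d : X -> X -> R) (u : nat -> X) : Prop :=
  forall eps : R, 0 < eps -> exists N : nat, forall n m, (N <= n)%N -> (N <= m)%N ->
    d (u n) (u m) < eps.

Definition dcomplete (R : realType) (X : Type) (d : X -> X -> R) : Prop :=
  forall u : nat -> X, dcauchy d u -> exists l, dconv d u l.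

Definition dclosed (R : realType) (X : Type) (d : X -> X -> R) (A : set X) : Prop :=
  forall (u : nat -> X) (l : X), (forall n, A (u n)) -> dconv d u l -> A l.

Definition Pcl (R : realType) (X : Type) (d : X -> X -> R) (A : set X) : Prop :=
  A !=set0 /\ dclosed d A.

Definition Fix (X : Type) (T : X -> set X) : set X := [set x | T x x].
Definition SFix (X : Type) (T : X -> set X) : set X := [set x | T x = [set x]].

Definition Dpt (R : realType) (X : Type) (d : X -> X -> R) (a : X) (B : set X)
  : \bar R := ereal_inf [set (d a b)%:E | b in B].

Definition exc (R : realType) (X : Type) (d : X -> X -> R) (A B : set X) : \bar R :=
  ereal_sup [set Dpt d a B | a in A].

Definition Hd (R : realType) (X : Type) (d : X -> X -> R) (A B : set X) : \bar R :=
  Order.max (exc d A B) (exc d B A).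

Definition TG (X : Type) (G : X -> X -> X) (T : X -> set X) (x : X) : set X :=
  [set G x u | u in T x].

Fixpoint Titer (X : Type) (T : X -> set X) (n : nat) (x : X) : set X :=
  match n with
  | O => [set x]
  | S m => \bigcup_(y in Titer T m x) T y
  end.

From HB Require Import structures.
From mathcomp Require Import all_boot all_order all_algebra.
From mathcomp Require Import all_classical all_reals all_analysis.
From mathcomp Require Import ring lra.
Import Order.TTheory GRing.Theory Num.Theory.
Local Open Scope classical_set_scope.
Local Open Scope ring_scope.

(* As xs is a strict fixed point and G(x,x) = x,
   T_G(xs) = {xs}, so the contraction condition at (x, xs) bounds H(T_G x, {xs}) by
   (alpha + beta) d(x, xs) + gamma D(xs, T_G x); since D(xs, T_G x) <= H(T_G x, {xs}),
   this gives H(T_G x, {xs}) <= k d(x, xs) with k = (alpha + beta) / (1 - gamma) < 1.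
   A fixed point y of T lies in T_G y, so d(y, xs) <= k d(y, xs) forces y = xs.
   Under (ii) every point of T^n(x) lies within (l k)^n d(x, xs) of xs.  Under (iii)
   the triangle inequality through a point of T_G x gives
   (1 - k) d(x, xs) <= D(x, T_G x) <= L D(x, T x). *)

Section PointSetDistance.
Context {R : realType} {X : Type} {d : X -> X -> R}.
Local Open Scope ereal_scope.

Lemma Dpt_lbound a {B : set X} {b} : B b -> Dpt d a B <= (d a b)%:E.
Proof. by move=> Bb; apply: ereal_inf_lbound; exists b. Qed.

Lemma le_Dpt a (B : set X) e :
  (forall b, B b -> e <= (d a b)%:E) -> e <= Dpt d a B.
Proof. by move=> le_e; apply: le_ereal_inf_tmp => _ [b Bb <-]; apply: le_e. Qed.

Lemma exc_ubound {A : set X} B {a} : A a -> Dpt d a B <= exc d A B.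
Proof. by move=> Aa; apply: ereal_sup_ubound; exists a. Qed.

Lemma ge_exc (A B : set X) e :
  (forall a, A a -> Dpt d a B <= e) -> exc d A B <= e.
Proof. by move=> le_e; apply: ge_ereal_sup => _ [a Aa <-]; apply: le_e. Qed.

Lemma exc_le_Hdl (A B : set X) : exc d A B <= Hd d A B.
Proof. by rewrite /Hd le_max lexx. Qed.

Lemma exc_le_Hdr (A B : set X) : exc d B A <= Hd d A B.
Proof. by rewrite /Hd le_max lexx orbT. Qed.

Lemma Hd_le (A B : set X) e : exc d A B <= e -> exc d B A <= e -> Hd d A B <= e.
Proof. by move=> leAB leBA; rewrite /Hd ge_max leAB leBA. Qed.

Lemma Dpt_set1 a b : Dpt d a [set b] = (d a b)%:E.
Proof. by apply/eqP; rewrite eq_le Dpt_lbound //=; apply: le_Dpt => c ->. Qed.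

Lemma exc_set1 b (A : set X) : exc d [set b] A = Dpt d b A.
Proof. by apply/eqP; rewrite eq_le exc_ubound //= andbT; apply: ge_exc => c ->. Qed.

Lemma dist_le_Hd_set1 {A : set X} {a} b : A a -> (d a b)%:E <= Hd d A [set b].
Proof. by move=> Aa; rewrite -Dpt_set1; exact: le_trans (exc_ubound _ Aa) (exc_le_Hdl _ _). Qed.

Hypothesis d_ge0 : forall x y, (0 <= d x y)%R.

Lemma Dpt_ge0 a (B : set X) : 0 <= Dpt d a B.
Proof. by apply: le_Dpt => b _; rewrite lee_fin. Qed.

Lemma Dpt_fin_num a {B : set X} : B !=set0 -> Dpt d a B \is a fin_num.
Proof.
move=> [b Bb]; rewrite ge0_fin_numE ?Dpt_ge0 //.
exact: le_lt_trans (Dpt_lbound _ Bb) (ltry _).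
Qed.

Lemma Hd_set1_ge0 (A : set X) b : 0 <= Hd d A [set b].
Proof. by apply: le_trans (exc_le_Hdr _ _); rewrite exc_set1 Dpt_ge0. Qed.

Hypothesis d_sym : forall x y, d x y = d y x.

Lemma Hd_set1_le (A : set X) b (r : R) : A !=set0 ->
  (forall a, A a -> (d a b <= r)%R) -> Hd d A [set b] <= r%:E.
Proof.
move=> [a0 Aa0] le_r; apply: Hd_le.
  by apply: ge_exc => a Aa; rewrite Dpt_set1 lee_fin le_r.
by rewrite exc_set1; apply: le_trans (Dpt_lbound _ Aa0) _; rewrite lee_fin d_sym le_r.
Qed.

End PointSetDistance.

Section Iterates.
Context {R : realType} {X : Type} {d : X -> X -> R} {T : X -> set X} {xs : X} {c : R}.
Hypothesis T_neq0 : forall x, T x !=set0.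
Hypothesis T_dist_le : forall y a, T y a -> d a xs <= c * d y xs.

Lemma Titer_neq0 n x : Titer T n x !=set0.
Proof.
elim: n => [|n [y Ty]]; first by exists x.
by have [a Ta] := T_neq0 y; exists a, y.
Qed.

Hypothesis d_ge0 : forall x y, 0 <= d x y.
Hypothesis c_ge0 : 0 <= c.

Lemma Titer_dist_le n x a : Titer T n x a -> d a xs <= c ^+ n * d x xs.
Proof.
elim: n a => [|n IHn] a /=; first by move=> ->; rewrite expr0 mul1r.
move=> [y Ty Tya]; apply: le_trans (T_dist_le _ _ Tya) _.
by rewrite exprS -mulrA ler_wpM2l // IHn.
Qed.

Hypothesis d_sym : forall x y, d x y = d y x.
Hypothesis c_lt1 : c < 1.

Lemma Hd_Titer_cvg0 x : Hd d (Titer T n x) [set xs] @[n --> \oo] --> 0%E.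
Proof.
apply: (@squeeze_cvge _ _ _ _ (cst 0%E) _ (fun n => (c ^+ n * d x xs)%:E)).
- apply: nearW => n; rewrite Hd_set1_ge0 //=.
  by apply: Hd_set1_le => //; [exact: Titer_neq0 | exact: Titer_dist_le].
- exact: cvg_cst.
- apply: cvg_EFin; first exact: nearW.
  by rewrite -(mul0r (d x xs)); apply: cvgMr_tmp; apply: cvg_expr; rewrite ger0_norm.
Qed.

End Iterates.

Lemma ulam_hyers_xi_exists {R : realFieldType} {alpha beta gamma L : R} :
  0 <= alpha -> 0 <= beta -> 0 <= gamma -> alpha + beta + gamma < 1 -> 0 <= L ->
  exists2 xi, 0 < xi < 1 &
    L / (1 - (alpha + beta) / (1 - gamma)) <= (1 + gamma) * L / ((1 - alpha - beta) * xi).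
Proof.
move=> alpha_ge0 beta_ge0 gamma_ge0 coef_lt1 L_ge0.
have ab_gt0 : 0 < 1 - alpha - beta by lra.
have s_gt0 : 0 < 1 - alpha - beta - gamma by lra.
have one_sub_k : 1 - (alpha + beta) / (1 - gamma) = (1 - alpha - beta - gamma) / (1 - gamma).
  by field; rewrite gt_eqF //; lra.
(* This xi turns the right-hand side into 2 (1 + gamma) L / (1 - alpha - beta - gamma),
   while the left-hand side is (1 - gamma) L / (1 - alpha - beta - gamma). *)
pose xi := (1 - alpha - beta - gamma) / (2 * (1 - alpha - beta)).
have ab_xi : (1 - alpha - beta) * xi = (1 - alpha - beta - gamma) / 2.
  by rewrite /xi; field; rewrite gt_eqF.
exists xi.
  by rewrite divr_gt0 ?mulr_gt0 //= ltr_pdivrMr ?mulr_gt0 //; lra.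
rewrite one_sub_k ab_xi !invf_div !mulrA ler_pM2r ?invr_gt0 //; nra.
Qed.

Section AdmissiblePerturbation.
Context {R : realType} {X : Type} {d : X -> X -> R} {G : X -> X -> X} {T : X -> set X}.
Context {alpha beta gamma : R} {xs : X}.
Hypothesis G_diag : forall x, G x x = x.

Lemma TG_Fix {y} : T y y -> TG G T y y.
Proof. by move=> Tyy; exists y; rewrite ?G_diag. Qed.

Lemma TG_SFix : SFix T xs -> TG G T xs = [set xs].
Proof.
move=> Txs; rewrite /TG Txs; apply/seteqP; split=> z.
  by move=> [_ -> <-]; rewrite G_diag.
by move=> ->; exists xs; rewrite ?G_diag.
Qed.

Hypothesis d_metric : is_metric d.
Let d_ge0 : forall x y, 0 <= d x y := d_metric.1.
Let d_eq0 : forall x y, d x y = 0 <-> x = y := d_metric.2.1.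
Let d_sym : forall x y, d x y = d y x := d_metric.2.2.1.
Let d_triangle : forall x y z, d x z <= d x y + d y z := d_metric.2.2.2.

Hypothesis xs_SFix : SFix T xs.
Hypothesis TG_contraction : forall x y, (Hd d (TG G T x) (TG G T y) <=
  (alpha * d x y)%:E + beta%:E * Dpt d x (TG G T y) + gamma%:E * Dpt d y (TG G T x))%E.
Hypotheses (alpha_ge0 : 0 <= alpha) (beta_ge0 : 0 <= beta) (gamma_ge0 : 0 <= gamma).
Hypothesis coef_lt1 : alpha + beta + gamma < 1.
Hypothesis T_neq0 : forall x, T x !=set0.

Let k := (alpha + beta) / (1 - gamma).

Let one_sub_gamma_gt0 : 0 < 1 - gamma.
Proof. by rewrite subr_gt0; apply: le_lt_trans coef_lt1; rewrite lerDr addr_ge0. Qed.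

Let k_ge0 : 0 <= k.
Proof. by apply: divr_ge0; [apply: addr_ge0 | apply: ltW]. Qed.

Let k_lt1 : k < 1.
Proof. by rewrite /k ltr_pdivrMr // mul1r ltrBrDr. Qed.

Lemma Hd_TG_SFix_le x : (Hd d (TG G T x) [set xs] <= (k * d x xs)%:E)%E.
Proof.
have TG_neq0 : TG G T x !=set0 by have [u Tu] := T_neq0 x; exists (G x u), u.
have Dpt_fin := Dpt_fin_num d_ge0 xs TG_neq0.
set r := fine (Dpt d xs (TG G T x)).
have le_H := TG_contraction x xs.
rewrite TG_SFix // Dpt_set1 -(fineK Dpt_fin) -!EFinM -!EFinD in le_H.
have r_le : r <= alpha * d x xs + beta * d x xs + gamma * r.
  rewrite -lee_fin fineK // -exc_set1; exact: le_trans (exc_le_Hdr _ _) le_H.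
have r_le_k : r <= k * d x xs.
  by rewrite /k mulrAC ler_pdivlMr //; lra.
have k_def : k * (1 - gamma) = alpha + beta by rewrite /k divfK ?gt_eqF.
apply: (le_trans le_H); rewrite lee_fin -/r.
have := ler_wpM2l gamma_ge0 r_le_k; nra.
Qed.

Lemma Fix_SFix_point : Fix T = [set xs].
Proof.
apply/seteqP; split=> [y Tyy|_ ->]; last by rewrite /Fix /= xs_SFix.
have := le_trans (dist_le_Hd_set1 xs (TG_Fix Tyy)) (Hd_TG_SFix_le y).
rewrite lee_fin => d_le.
have : (1 - k) * d y xs <= 0 by rewrite mulrBl mul1r subr_le0.
rewrite pmulr_rle0 ?subr_gt0 // => d_le0.
by apply/d_eq0/le_anti; rewrite d_le0 d_ge0.
Qed.

Lemma SFix_point : SFix T = [set xs].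
Proof.
apply/seteqP; split=> [y Ty|_ ->] //.
by rewrite -Fix_SFix_point /Fix /= Ty.
Qed.

Section IterateConvergence.
Context {l : R}.
Hypothesis l_ge0 : 0 <= l.
Hypothesis T_Hd_le : forall x,
  (Hd d (T x) [set xs] <= l%:E * Hd d (TG G T x) [set xs])%E.

Lemma T_dist_SFix_le y a : T y a -> d a xs <= l * k * d y xs.
Proof.
move=> Tya; rewrite -lee_fin -mulrA EFinM.
apply: le_trans (dist_le_Hd_set1 xs Tya) (le_trans (T_Hd_le y) _).
exact: lee_wpmul2l (Hd_TG_SFix_le y).
Qed.

Hypothesis l_lt1 : l < 1.

Lemma Hd_Titer_SFix_cvg0 x : Hd d (Titer T n x) [set xs] @[n --> \oo] --> 0%E.
Proof.
apply: (Hd_Titer_cvg0 T_neq0 T_dist_SFix_le d_ge0 _ d_sym).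
  by rewrite mulr_ge0.
by rewrite (le_lt_trans _ l_lt1) // ler_piMr // ltW.
Qed.

End IterateConvergence.

Lemma dist_SFix_le_Dpt_TG x : (((1 - k) * d x xs)%:E <= Dpt d x (TG G T x))%E.
Proof.
apply: le_Dpt => w TGw; rewrite lee_fin.
have w_le : d w xs <= k * d x xs.
  by rewrite -lee_fin; exact: le_trans (dist_le_Hd_set1 xs TGw) (Hd_TG_SFix_le x).
have := d_triangle x w xs; lra.
Qed.

Lemma dist_SFix_le_Dpt {L} :
  (forall x, Dpt d x (TG G T x) <= L%:E * Dpt d x (T x))%E ->
  forall x, ((d x xs)%:E <= (L / (1 - k))%:E * Dpt d x (T x))%E.
Proof.
move=> TG_le x; have k1_gt0 : 0 < 1 - k by rewrite subr_gt0.
have inv_ge0 : (0 <= ((1 - k)^-1)%:E)%E by rewrite lee_fin invr_ge0 ltW.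
have := lee_wpmul2l inv_ge0 (le_trans (dist_SFix_le_Dpt_TG x) (TG_le x)).
by rewrite -EFinM mulrA mulVf ?gt_eqF // mul1r muleA -EFinM mulrC.
Qed.

Lemma ulam_hyers_SFix L : 0 <= L ->
  (forall x, Dpt d x (TG G T x) <= L%:E * Dpt d x (T x))%E ->
  exists xi, 0 < xi < 1 /\ forall x,
    ((d x xs)%:E <= ((1 + gamma) * L / ((1 - alpha - beta) * xi))%:E * Dpt d x (T x))%E.
Proof.
move=> L_ge0 TG_le.
have [xi xi01 coef_le] := ulam_hyers_xi_exists alpha_ge0 beta_ge0 gamma_ge0 coef_lt1 L_ge0.
exists xi; split=> // x; apply: le_trans (dist_SFix_le_Dpt TG_le x) _.
by apply: lee_wpmul2r; [exact: Dpt_ge0 | rewrite lee_fin].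
Qed.

End AdmissiblePerturbation.

Theorem mainTheorem3 (R : realType) (X : Type) (d : X -> X -> R)
  (G : X -> X -> X) (T : X -> set X) (alpha beta gamma : R) :
  is_metric d -> dcomplete d ->
  (forall x, G x x = x) ->
  (forall x y, G x y = x -> y = x) ->
  (forall x, Pcl d (T x)) ->
  SFix T !=set0 ->
  0 <= alpha -> 0 <= beta -> 0 <= gamma -> alpha + beta + gamma < 1 ->
  (forall x y, (Hd d (TG G T x) (TG G T y) <=
      (alpha * d x y)%:E + beta%:E * Dpt d x (TG G T y)
      + gamma%:E * Dpt d y (TG G T x))%E) ->
  exists xs : X,
    Fix T = [set xs] /\ SFix T = [set xs] /\
    (forall l : R, 0 < l < 1 ->
        (forall x, (Hd d (T x) [set xs] <= l%:E * Hd d (TG G T x) [set xs])%E) ->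
      forall x, Hd d (Titer T n x) [set xs] @[n --> \oo] --> 0%E) /\
    (forall L : R, 0 < L ->
        (forall x, (Dpt d x (TG G T x) <= L%:E * Dpt d x (T x))%E) ->
      exists xi : R, 0 < xi < 1 /\
        forall x, ((d x xs)%:E <=
          ((1 + gamma) * L / ((1 - alpha - beta) * xi))%:E * Dpt d x (T x))%E).
Proof.
move=> d_metric _ G_diag _ T_Pcl [xs xs_SFix] alpha_ge0 beta_ge0 gamma_ge0.
move=> coef_lt1 TG_contraction; have T_neq0 x : T x !=set0 := (T_Pcl x).1.
exists xs; split; first exact: (Fix_SFix_point G_diag d_metric).
split; first exact: (SFix_point G_diag d_metric).
have Hd_cvg0 := Hd_Titer_SFix_cvg0 G_diag d_metric xs_SFix TG_contraction
  alpha_ge0 beta_ge0 gamma_ge0 coef_lt1 T_neq0.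
split=> [l /andP[l_gt0 l_lt1] T_Hd_le|L /ltW L_ge0].
  exact: Hd_cvg0 (ltW l_gt0) T_Hd_le l_lt1.
exact: (ulam_hyers_SFix G_diag d_metric).
Qed.
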